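(* Assume the disturbance satisfies $\|\dot d(t)\|\le \xi_d$ for all $t\ge 0$. Let $C_1,C_2,\beta>0$, let $e_1=\hat F_1-\omega_e$, $e_2=\hat F_2-J^{-1}d$, and $\varepsilon=[\beta e_1^{T},e_2^{T}]^{T}\in\mathbb R^6$. Then there exist a symmetric positive definite matrix $Q_2\in\mathbb R^{6\times 6}$ and constants $C_d>0$, $h_m\ge 0$ such that $V_\varepsilon=\varepsilon^TQ_2\varepsilon$ satisfies $\dot V_\varepsilon\le -C_dV_\varepsilon+h_m$ along solutions. Consequently $\varepsilon$ converges exponentially into a compact set (it is uniformly ultimately bounded), and the disturbance estimation error $\tilde d=d-\hat d$ is bounded on $[0,\infty)$ and uniformly ultimately bounded, with ultimate bound of the form $\|\tilde d\|\le \lambda_{J\max}\sqrt{h_m/(\chi C_d\lambda_{Q\min})}$ for any $\chi\in(0,1)$, where $\lambda_{Q\min}$ is the smallest eigenvalue of $Q_2$.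
   Context: Attitude error dynamics: $\dot q_{ev}=F_e\omega_e$, $\dot q_{e0}=-\tfrac12 q_{ev}^T\omega_e$, $J\dot\omega_e=\Omega_e+u+d$, where $(q_{ev},q_{e0})\in\mathbb R^3\times\mathbb R$ is a unit quaternion, $\omega_e\in\mathbb R^3$, $F_e=\tfrac12(q_{e0}I_3+q_{ev}^\times)$ with $a^\times$ the skew-symmetric cross-product matrix of $a$, $J\in\mathbb R^{3\times3}$ is a known symmetric positive definite matrix with smallest/largest eigenvalues $\lambda_{J\min},\lambda_{J\max}$, $\Omega_e(t)\in\mathbb R^3$ is a known signal, $u(t)\in\mathbb R^3$ is the control input and $d(t)\in\mathbb R^3$ is an unknown bounded disturbance. Disturbance observer: with $F_d=J^{-1}\Omega_e$, the observer states $\hat F_1,\hat F_2\in\mathbb R^3$ evolve by $\dot{\hat F}_1=F_d+J^{-1}u+\hat F_2-C_1\beta e_1$, $\dot{\hat F}_2=-C_2\beta^2e_1$, where $e_1=\hat F_1-\omega_e$; the disturbance estimate is $\hat d=J\hat F_2$. *)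

From HB Require Import structures.
From mathcomp Require Import all_boot all_order all_algebra.
From mathcomp Require Import all_classical all_reals all_analysis.
Set Implicit Arguments. Unset Strict Implicit. Unset Printing Implicit Defensive.
Import Order.TTheory GRing.Theory Num.Theory.
Import numFieldNormedType.Exports.
Local Open Scope ring_scope.
Local Open Scope classical_set_scope.

Section Defs.
Variable R : realType.

Definition vnorm n (v : 'cV[R]_n) : R := Num.sqrt (\sum_i (v i 0) ^+ 2).

Definition skew (a : 'cV[R]_3) : 'M[R]_3 :=
  \matrix_(i < 3, j < 3)
    match nat_of_ord i, nat_of_ord j with
    | 0, 1 => - a (inord 2) 0 | 0, 2 => a (inord 1) 0
    | 1, 0 => a (inord 2) 0   | 1, 2 => - a (inord 0) 0
    | 2, 0 => - a (inord 1) 0 | 2, 1 => a (inord 0) 0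
    | _, _ => 0 end.

Definition Fe (q0 : R) (qv : 'cV[R]_3) : 'M[R]_3 :=
  2^-1 *: (q0%:M + skew qv).

Definition vderivable n (x : R -> 'cV[R]_n) (t : R) : Prop :=
  forall i, derivable (fun s => x s i 0) t 1.
Definition vderiv n (x : R -> 'cV[R]_n) (t : R) : 'cV[R]_n :=
  \col_i (fun s => x s i 0)^`() t.

Definition vcont0 n (x : R -> 'cV[R]_n) : Prop :=
  forall i, {within [set t : R | 0 <= t], continuous (fun s => x s i 0)}.

Definition sym n (A : 'M[R]_n) : Prop := A^T = A.
Definition posdef n (A : 'M[R]_n) : Prop :=
  forall v : 'cV[R]_n, v != 0 -> 0 < (v^T *m A *m v) 0 0.

Definition is_min_eig n (A : 'M[R]_n) (l : R) : Prop :=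
  eigenvalue A l /\ forall m, eigenvalue A m -> l <= m.
Definition is_max_eig n (A : 'M[R]_n) (l : R) : Prop :=
  eigenvalue A l /\ forall m, eigenvalue A m -> m <= l.

Definition qform n (Q : 'M[R]_n) (x : 'cV[R]_n) : R := (x^T *m Q *m x) 0 0.

End Defs.

(* With [z1 = beta e1] and [z2 = e2], the observer error obeys
   [z1' = beta z2 - C1 beta z1] and [z2' = - C2 beta z1 - J^-1 d'].  For the
   block matrix [Q2 = [[a I, -b I], [-b I, c I]]] with [a = C2 (C1^2 + 2 C2)],
   [b = C1 C2], [c = 2 (C1^2 + C2)], the cross terms [z1 . z2] cancel in
   [dV/dt], which leaves [-2 beta C1 C2 ((C1^2 + C2) |z1|^2 + |z2|^2)] plus terms
   linear in [J^-1 d'] that Young's inequality absorbs into a constant [hm].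
   Comparing [V] with the solution of [W' = - Cd W + hm] gives the exponential
   convergence into [{V <= hm / Cd}]; the bounds on [eps] follow from the
   smallest eigenvalue of [Q2], and those on [d - d_hat = - J e2] from
   [|J x| <= lambda_Jmax |x|], which holds because the supremum of the Rayleigh
   quotient of [J] is an eigenvalue. *)

From HB Require Import structures.
From mathcomp Require Import all_boot all_order all_algebra.
From mathcomp Require Import all_classical all_reals all_analysis.
From mathcomp Require Import ring lra.
Import Order.TTheory GRing.Theory Num.Theory.
Import numFieldNormedType.Exports.
Set Implicit Arguments. Unset Strict Implicit. Unset Printing Implicit Defensive.
Local Open Scope ring_scope.
Local Open Scope classical_set_scope.

Section DotProduct.
Variables (R : realType) (n : nat).
Implicit Types (x y z : 'cV[R]_n) (M : 'M[R]_n).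

Definition dotv x y : R := (x^T *m y) 0 0.

Definition bform M x y : R := (x^T *m M *m y) 0 0.

Lemma dotvE x y : dotv x y = \sum_i x i 0 * y i 0.
Proof. by rewrite /dotv mxE; apply: eq_bigr => i _; rewrite mxE. Qed.

Lemma dotvC x y : dotv x y = dotv y x.
Proof. by rewrite !dotvE; apply: eq_bigr => i _; rewrite mulrC. Qed.

Lemma dotvDl x y z : dotv (x + y) z = dotv x z + dotv y z.
Proof. by rewrite /dotv linearD /= mulmxDl mxE. Qed.

Lemma dotvZl k x y : dotv (k *: x) y = k * dotv x y.
Proof. by rewrite /dotv linearZ /= -scalemxAl mxE. Qed.

Lemma dotvNl x y : dotv (- x) y = - dotv x y.
Proof. by rewrite -scaleN1r dotvZl mulN1r. Qed.

Lemma dotvBl x y z : dotv (x - y) z = dotv x z - dotv y z.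
Proof. by rewrite dotvDl dotvNl. Qed.

Lemma dotvDr x y z : dotv x (y + z) = dotv x y + dotv x z.
Proof. by rewrite dotvC dotvDl !(dotvC x). Qed.

Lemma dotvZr k x y : dotv x (k *: y) = k * dotv x y.
Proof. by rewrite dotvC dotvZl dotvC. Qed.

Lemma dotvBr x y z : dotv x (y - z) = dotv x y - dotv x z.
Proof. by rewrite !(dotvC x) dotvBl. Qed.

Lemma sqr_coord_le_dotv x i : x i 0 ^+ 2 <= dotv x x.
Proof.
rewrite dotvE (bigD1 i) //= -expr2 lerDl.
by apply: sumr_ge0 => j _; rewrite -expr2 sqr_ge0.
Qed.

Lemma dotv_ge0 x : 0 <= dotv x x.
Proof. by rewrite dotvE; apply: sumr_ge0 => i _; rewrite -expr2 sqr_ge0. Qed.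

Lemma dotv_gt0 x : x != 0 -> 0 < dotv x x.
Proof.
apply: contraNT; rewrite -leNgt => x_le0; apply/eqP/matrixP => i j.
rewrite (ord1 j) mxE; apply/eqP; rewrite -sqrf_eq0 eq_le sqr_ge0 andbT.
exact: le_trans (sqr_coord_le_dotv x i) x_le0.
Qed.

(* From [0 <= |r x - k y|^2]. *)
Lemma young_dotv r k x y : 0 < r ->
  2 * k * dotv x y <= r * dotv x x + k ^+ 2 / r * dotv y y.
Proof.
move=> r_gt0; have := dotv_ge0 (r *: x - k *: y).
rewrite !(dotvBl, dotvBr, dotvZl, dotvZr) (dotvC y x) => h.
rewrite -subr_ge0 -(pmulr_rge0 _ r_gt0).
have -> : r * (r * dotv x x + k ^+ 2 / r * dotv y y - 2 * k * dotv x y)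
  = r ^+ 2 * dotv x x + k ^+ 2 * dotv y y - 2 * r * k * dotv x y.
  by field; rewrite gt_eqF.
nra.
Qed.

Lemma bformE M x y : bform M x y = dotv x (M *m y).
Proof. by rewrite /bform /dotv mulmxA. Qed.

Lemma bformC M x y : sym M -> bform M x y = bform M y x.
Proof.
move=> sM; rewrite /bform.
have -> : (x^T *m M *m y) 0 0 = (x^T *m M *m y)^T 0 0 by rewrite [RHS]mxE.
by rewrite !trmx_mul trmxK sM mulmxA.
Qed.

Lemma bformDl M x y z : bform M (x + y) z = bform M x z + bform M y z.
Proof. by rewrite !bformE dotvDl. Qed.

Lemma bformZl M k x y : bform M (k *: x) y = k * bform M x y.
Proof. by rewrite !bformE dotvZl. Qed.

Lemma bformDr M x y z : bform M x (y + z) = bform M x y + bform M x z.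
Proof. by rewrite !bformE mulmxDr dotvDr. Qed.

Lemma bformZr M k x y : bform M x (k *: y) = k * bform M x y.
Proof. by rewrite !bformE -scalemxAr dotvZr. Qed.

Lemma bform0 M : bform M 0 0 = 0.
Proof. by rewrite /bform trmx0 !mul0mx mxE. Qed.

Lemma bform_ge0 M : posdef M -> forall x, 0 <= bform M x x.
Proof. by move=> pM x; have [->|/pM/ltW//] := eqVneq x 0; rewrite bform0. Qed.

(* Evaluate the form at [s x - q y], [q x - p y] and [x - q y], where
   [p], [q], [s] are its Gram entries. *)
Lemma bform_CauchySchwarz M x y : sym M -> (forall v, 0 <= bform M v v) ->
  bform M x y ^+ 2 <= bform M x x * bform M y y.
Proof.
move=> sM psd.
set p := bform M x x; set q := bform M x y; set s := bform M y y.
have gram a b : bform M (a *: x + b *: y) (a *: x + b *: y)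
    = a ^+ 2 * p + 2 * a * b * q + b ^+ 2 * s.
  rewrite !(bformDl, bformDr, bformZl, bformZr) [bform M y x]bformC // -/p -/q -/s.
  ring.
have h1 := psd (s *: x + (- q) *: y); rewrite gram in h1.
have h2 := psd (q *: x + (- p) *: y); rewrite gram in h2.
have h3 := psd (1 *: x + (- q) *: y); rewrite gram in h3.
have p0 : 0 <= p by apply: psd.
have s0 : 0 <= s by apply: psd.
have [s_gt0|] := ltrP 0 s.
  by rewrite -subr_ge0 -(pmulr_rge0 _ s_gt0); nra.
have [p_gt0|] := ltrP 0 p; first by nra.
nra.
Qed.

Lemma posdef_unitmx M : posdef M -> M \in unitmx.
Proof.
move=> pM; apply: contraT; rewrite -row_free_unit -kermx_eq0 => /rowV0Pn[v].
rewrite sub_kermx => /eqP vM v_neq0.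
have : v^T != 0 by rewrite trmx_eq0.
by move=> /pM; rewrite trmxK vM mul0mx mxE ltxx.
Qed.

End DotProduct.

Lemma dotv_col_mx (R : realType) m n (x x' : 'cV[R]_m) (y y' : 'cV[R]_n) :
  dotv (col_mx x y) (col_mx x' y') = dotv x x' + dotv y y'.
Proof. by rewrite /dotv tr_col_mx mul_row_col mxE. Qed.

Section EuclideanNorm.
Variables (R : realType) (n : nat).
Implicit Types (x y : 'cV[R]_n) (M : 'M[R]_n).

Lemma vnormE x : vnorm x = Num.sqrt (dotv x x).
Proof. by rewrite /vnorm dotvE; congr Num.sqrt; apply: eq_bigr => i _; rewrite expr2. Qed.

Lemma vnorm_ge0 x : 0 <= vnorm x.
Proof. exact: sqrtr_ge0. Qed.

Lemma sqr_vnorm x : vnorm x ^+ 2 = dotv x x.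
Proof. by rewrite vnormE sqr_sqrtr ?dotv_ge0. Qed.

Lemma vnormN x : vnorm (- x) = vnorm x.
Proof. by rewrite !vnormE dotvNl dotvC dotvNl opprK. Qed.

Lemma abs_coord_le_vnorm x i : `|x i 0| <= vnorm x.
Proof.
rewrite -(ler_pXn2r (n := 2)) ?nnegrE ?normr_ge0 ?vnorm_ge0 //.
by rewrite real_normK ?num_real // sqr_vnorm sqr_coord_le_dotv.
Qed.

Lemma dotv_normalize x : x != 0 -> dotv ((vnorm x)^-1 *: x) ((vnorm x)^-1 *: x) = 1.
Proof.
move=> x_neq0; rewrite dotvZl dotvZr mulrA -expr2 exprVn sqr_vnorm mulVf //.
by rewrite gt_eqF ?dotv_gt0.
Qed.

Definition mx_abs_sum M := \sum_i \sum_j `|M i j|.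

Lemma bform_le_mx_abs_sum M x y : dotv x x = 1 -> dotv y y = 1 ->
  bform M x y <= mx_abs_sum M.
Proof.
have coord_le1 (z : 'cV[R]_n) i : dotv z z = 1 -> `|z i 0| <= 1.
  by move=> z1; have := abs_coord_le_vnorm z i; rewrite vnormE z1 sqrtr1.
move=> x1 y1; rewrite bformE dotvE; apply: le_trans (ler_norm _) _.
apply: le_trans (ler_norm_sum _ _ _) _; apply: ler_sum => i _.
rewrite mxE mulr_sumr; apply: le_trans (ler_norm_sum _ _ _) _.
apply: ler_sum => j _; rewrite mulrA !normrM.
have xM : `|x i 0| * `|M i j| <= `|M i j| by rewrite ler_piMl ?coord_le1.
by apply: le_trans (ler_wpM2r (normr_ge0 _) xM) _; rewrite ler_piMr ?coord_le1.
Qed.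

(* With [y = M^-1 x], Cauchy-Schwarz gives [1 = (x^T M y)^2 <= (x^T M x) (x^T M^-1 x)]. *)
Lemma unitmx_bform_ge M x : sym M -> (forall v, 0 <= bform M v v) ->
  M \in unitmx -> dotv x x = 1 -> 1 <= bform M x x * (mx_abs_sum (invmx M) + 1).
Proof.
move=> sM psd Mu x1; set y := invmx M *m x.
have My : M *m y = x by rewrite /y mulKVmx.
have xy : bform M x y = 1 by rewrite bformE My.
have yy : bform M y y = bform (invmx M) x x by rewrite !bformE My dotvC.
have := bform_CauchySchwarz x y sM psd; rewrite xy yy expr1n.
have := bform_le_mx_abs_sum (invmx M) x1 x1.
have := psd x; have : 0 <= mx_abs_sum (invmx M).
  by apply: sumr_ge0 => i _; apply: sumr_ge0.
nra.
Qed.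

End EuclideanNorm.

Lemma vnorm_col_mx_r (R : realType) m n (x : 'cV[R]_m) (y : 'cV[R]_n) :
  vnorm y <= vnorm (col_mx x y).
Proof. by rewrite !vnormE dotv_col_mx ler_wsqrtr // lerDr dotv_ge0. Qed.

Section RayleighQuotient.
Variables (R : realType) (n : nat) (J : 'M[R]_n.+1).
Hypotheses (sJ : sym J) (pJ : posdef J).

Definition rayleigh_max (M : 'M[R]_n.+1) :=
  sup [set bform M x x | x in [set x | dotv x x = 1]].

Lemma exists_unit_vector : exists x : 'cV[R]_n.+1, dotv x x = 1.
Proof.
have e_neq0 : const_mx 1 != 0 :> 'cV[R]_n.+1.
  by apply/eqP => /matrixP /(_ 0 0); rewrite !mxE; apply/eqP; rewrite oner_neq0.
by eexists; apply: dotv_normalize e_neq0.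
Qed.

Lemma has_sup_rayleigh : has_sup [set bform J x x | x in [set x | dotv x x = 1]].
Proof.
split; first by have [x x1] := exists_unit_vector; exists (bform J x x), x.
by exists (mx_abs_sum J) => _ [x /= x1 <-]; apply: bform_le_mx_abs_sum.
Qed.

Lemma bform_le_rayleigh_max v : bform J v v <= rayleigh_max J * dotv v v.
Proof.
have [->|v_neq0] := eqVneq v 0; first by rewrite bform0 /dotv trmx0 mul0mx mxE mulr0.
set s := vnorm v; have s_gt0 : 0 < s by rewrite /s vnormE sqrtr_gt0 dotv_gt0.
have : bform J (s^-1 *: v) (s^-1 *: v) <= rayleigh_max J.
  by apply: sup_upper_bound; [exact: has_sup_rayleigh | exists (s^-1 *: v) => //=; apply: dotv_normalize].
have -> : dotv v v = s ^+ 2 by rewrite sqr_vnorm.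
have -> : bform J v v = s ^+ 2 * bform J (s^-1 *: v) (s^-1 *: v).
  by rewrite bformZl bformZr; field; rewrite gt_eqF.
by rewrite [_ * s ^+ 2]mulrC ler_pM2l ?exprn_gt0.
Qed.

Lemma rayleigh_max_ge0 : 0 <= rayleigh_max J.
Proof.
have [x x1] := exists_unit_vector.
by have := bform_le_rayleigh_max x; rewrite x1 mulr1; apply: le_trans; apply: bform_ge0.
Qed.

(* [rayleigh_max J - J] is positive semidefinite; it is singular because
   [unitmx_bform_ge] would otherwise keep its form away from 0 on the unit
   sphere, whereas its form approaches 0 along a maximizing sequence. *)
Lemma rayleigh_max_eigenvalue : eigenvalue J (rayleigh_max J).
Proof.
set mu := rayleigh_max J; pose N := mu%:M - J.
have sN : sym N by rewrite /sym /N linearB /= tr_scalar_mx sJ.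
have bN v : bform N v v = mu * dotv v v - bform J v v.
  by rewrite !bformE mulmxBl dotvBr mul_scalar_mx dotvZr.
have psdN v : 0 <= bform N v v by rewrite bN subr_ge0 bform_le_rayleigh_max.
have N_singular : N \notin unitmx.
  apply/negP => Nu; set K := mx_abs_sum (invmx N).
  have K0 : 0 <= K by apply: sumr_ge0 => i _; apply: sumr_ge0.
  have e_gt0 : 0 < (2 * (K + 1))^-1 by rewrite invr_gt0; lra.
  have [_ [x /= x1 <-] mu_lt] := sup_adherent e_gt0 has_sup_rayleigh.
  rewrite -/(rayleigh_max J) -/mu in mu_lt.
  have := unitmx_bform_ge sN psdN Nu x1; rewrite bN x1 mulr1 -/K.
  have : (mu - bform J x x) * (K + 1) < (2 * (K + 1))^-1 * (K + 1).
    by rewrite ltr_pM2r; lra.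
  rewrite invfM -mulrA mulVf; last by apply/eqP; lra.
  lra.
rewrite /eigenvalue /eigenspace kermx_eq0 row_free_unit.
have -> : J - mu%:M = (-1) *: N by rewrite scaleN1r /N opprB.
by rewrite unitmxZ ?unitrN ?unitr1.
Qed.

(* Cauchy-Schwarz gives [|J x|^4 = (x^T J (J x))^2 <= (x^T J x) ((J x)^T J (J x))]. *)
Lemma vnorm_mulmx_le_rayleigh x : vnorm (J *m x) <= rayleigh_max J * vnorm x.
Proof.
have cs := bform_CauchySchwarz x (J *m x) sJ (bform_ge0 pJ).
have h1 := bform_le_rayleigh_max x; have h2 := bform_le_rayleigh_max (J *m x).
have mu0 := rayleigh_max_ge0; have a0 := dotv_ge0 (J *m x).
have ea : bform J x (J *m x) = dotv (J *m x) (J *m x).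
  by rewrite /bform /dotv trmx_mul sJ mulmxA.
rewrite ea in cs.
set mu := rayleigh_max J in h1 h2 mu0 *; set a := dotv (J *m x) (J *m x) in cs h2 a0 *.
have ha : a <= mu ^+ 2 * dotv x x.
  have [->|a_neq0] := eqVneq a 0; first by rewrite mulr_ge0 ?sqr_ge0 ?dotv_ge0.
  have a_gt0 : 0 < a by rewrite lt_def a_neq0 a0.
  rewrite -(ler_pM2l a_gt0) -expr2; apply: le_trans cs _.
  apply: le_trans (ler_pM (bform_ge0 pJ _) (bform_ge0 pJ _) h1 h2) _.
  by rewrite (_ : _ * _ = a * (mu ^+ 2 * dotv x x)) //; ring.
rewrite !vnormE -/a; apply: le_trans (ler_wsqrtr ha) _.
by rewrite sqrtrM ?sqr_ge0 // sqrtr_sqr ger0_norm.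
Qed.

End RayleighQuotient.

Lemma vnorm_mulmx_le_max_eig (R : realType) n (J : 'M[R]_n.+1) l x :
  sym J -> posdef J -> is_max_eig J l -> vnorm (J *m x) <= l * vnorm x.
Proof.
move=> sJ pJ [_ le_l]; apply: le_trans (vnorm_mulmx_le_rayleigh sJ pJ x) _.
by rewrite ler_wpM2r ?vnorm_ge0 // le_l // rayleigh_max_eigenvalue.
Qed.

Lemma max_eig_ge0 (R : realType) n (J : 'M[R]_n.+1) l :
  sym J -> posdef J -> is_max_eig J l -> 0 <= l.
Proof.
move=> sJ pJ [_ le_l].
exact: le_trans (rayleigh_max_ge0 pJ) (le_l _ (rayleigh_max_eigenvalue sJ)).
Qed.

Lemma sym_invmx (R : realType) n (J : 'M[R]_n) : sym J -> sym (invmx J).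
Proof. by move=> sJ; rewrite /sym trmx_inv sJ. Qed.

Lemma posdef_invmx (R : realType) n (J : 'M[R]_n) : posdef J -> posdef (invmx J).
Proof.
move=> pJ v v_neq0; have Ju := posdef_unitmx pJ.
have w_neq0 : invmx J *m v != 0.
  by apply: contra v_neq0 => /eqP w0; rewrite -(mulKVmx Ju v) w0 mulmx0.
change (0 < bform (invmx J) v v).
suff -> : bform (invmx J) v v = bform J (invmx J *m v) (invmx J *m v) by exact: pJ.
by rewrite bformE [RHS]bformE mulKVmx // dotvC.
Qed.

Section BlockForm.
Variables (R : realType) (m : nat).
Implicit Types (a b c l : R).

Definition blockQ a b c : 'M[R]_(m + m) := block_mx a%:M (- b%:M) (- b%:M) c%:M.

Lemma sym_blockQ a b c : sym (blockQ a b c).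
Proof. by rewrite /sym /blockQ tr_block_mx !linearN /= !tr_scalar_mx. Qed.

Lemma bform_blockQ a b c (x y x' y' : 'cV[R]_m) :
  bform (blockQ a b c) (col_mx x y) (col_mx x' y') =
  a * dotv x x' - b * dotv x y' - b * dotv y x' + c * dotv y y'.
Proof.
rewrite /bform /blockQ tr_col_mx mul_row_block mul_row_col !mulmxN !mul_mx_scalar.
by rewrite !mulmxDl !mulNmx -!scalemxAl /dotv !mxE; ring.
Qed.

Lemma bform_blockQ_le a b c (v : 'cV[R]_(m + m)) : 0 <= a -> 0 <= b -> 0 <= c ->
  bform (blockQ a b c) v v <= (a + b + c) * dotv v v.
Proof.
rewrite -[v]vsubmxK bform_blockQ dotv_col_mx (dotvC (dsubmx v)).
set x := usubmx v; set y := dsubmx v => a0 b0 c0.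
have := dotv_ge0 (x + y); rewrite !(dotvDl, dotvDr) (dotvC y x).
have := dotv_ge0 x; have := dotv_ge0 y; nra.
Qed.

(* The smaller root of [(a - l) (c - l) = b^2], i.e. the smallest eigenvalue of [blockQ a b c]. *)
Definition blockQ_min a b c := (a + c - Num.sqrt ((a - c) ^+ 2 + 4 * b ^+ 2)) / 2.

Lemma blockQ_min_spec a b c : 0 < a -> 0 < b -> 0 < c -> b ^+ 2 < a * c ->
  let l := blockQ_min a b c in [/\ 0 < l, l < a & (a - l) * (c - l) = b ^+ 2].
Proof.
move=> a0 b0 c0 abc l; rewrite /l /blockQ_min.
set s := Num.sqrt _; have s0 : 0 <= s by apply: sqrtr_ge0.
have ss : s * s = (a - c) ^+ 2 + 4 * b ^+ 2.
  by rewrite -expr2 sqr_sqrtr // addr_ge0 ?sqr_ge0 // mulr_ge0 ?sqr_ge0.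
have ca_lt_s : c - a < s.
  have [ca0|ca0] := ltrP (c - a) 0; first lra.
  have : (c - a) * (c - a) < s * s by rewrite ss; nra.
  nra.
have s_lt_ac : s < a + c.
  have : s * s < (a + c) * (a + c) by rewrite ss; nra.
  nra.
split; lra.
Qed.

Lemma blockQ_min_le a b c l (v : 'cV[R]_(m + m)) : l < a -> (a - l) * (c - l) = b ^+ 2 ->
  l * dotv v v <= bform (blockQ a b c) v v.
Proof.
move=> la E; rewrite -[v]vsubmxK bform_blockQ dotv_col_mx (dotvC (dsubmx v)).
set x := usubmx v; set y := dsubmx v.
have := dotv_ge0 ((a - l) *: x - b *: y).
rewrite !(dotvBl, dotvBr, dotvZl, dotvZr) (dotvC y x).
set X := dotv x x; set Y := dotv y y; set P := dotv x y => h.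
have al : 0 < a - l by lra.
have E' : (a - l) * (c - l) * Y = b ^+ 2 * Y by rewrite E.
have : 0 <= (a - l) * ((a - l) * X - 2 * b * P + (c - l) * Y) by lra.
rewrite pmulr_rge0 //; lra.
Qed.

End BlockForm.

Lemma blockQ_posdef (R : realType) m (a b c l : R) : 0 < l -> l < a ->
  (a - l) * (c - l) = b ^+ 2 -> posdef (blockQ m a b c).
Proof.
move=> l0 la E v v_neq0; apply: lt_le_trans (blockQ_min_le v la E).
by rewrite mulr_gt0 ?dotv_gt0.
Qed.

(* [row_mx (b e) ((a - l) e)] with [e] the all-ones row is an eigenvector for [l]. *)
Lemma blockQ_min_eig (R : realType) m (a b c l : R) : l < a ->
  (a - l) * (c - l) = b ^+ 2 -> is_min_eig (blockQ m.+1 a b c) l.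
Proof.
move=> la E; split.
  apply/eigenvalueP; pose e : 'rV[R]_m.+1 := const_mx 1.
  have e_neq0 : e != 0.
    by apply/eqP => /matrixP /(_ 0 0); rewrite !mxE; apply/eqP; rewrite oner_neq0.
  exists (row_mx (b *: e) ((a - l) *: e)).
    rewrite /blockQ mul_row_block !mulmxN !mul_mx_scalar !scalerA scale_row_mx !scalerA.
    rewrite -!scaleNr -!scalerDl; congr row_mx; congr (_ *: _).
      by change (a * b + (- b) * (a - l) = l * b); ring.
    by change ((- b) * b + c * (a - l) = l * (a - l)); lra.
  apply: contra e_neq0 => /eqP; rewrite -row_mx0 => /eq_row_mx [_ /eqP].
  by rewrite scaler_eq0 subr_eq0 gt_eqF.
move=> k /eigenvalueP [v vQ v_neq0].
have vT_neq0 : v^T != 0 by rewrite trmx_eq0.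
have vv_gt0 : 0 < (v *m v^T) 0 0 by have := dotv_gt0 vT_neq0; rewrite /dotv trmxK.
have := blockQ_min_le v^T la E; rewrite /bform /dotv trmxK vQ -scalemxAl.
by rewrite [X in _ <= X]mxE ler_pM2r.
Qed.

Section Derivatives.
Variable R : realType.
Implicit Types (f g : R -> R) (t : R).

Lemma is_derive_mulf f g t (f' g' : R) : is_derive t 1 f f' -> is_derive t 1 g g' ->
  is_derive t 1 (fun s => f s * g s) (f' * g t + f t * g').
Proof.
move=> df dg; change (is_derive t 1 (f * g) (f' * g t + f t * g')).
by apply: is_derive_eq (is_deriveM df dg) _; rewrite addrC mulrC.
Qed.

Lemma is_derive_sumf n (f : 'I_n -> R -> R) t (f' : 'I_n -> R) :
  (forall i, is_derive t 1 (f i) (f' i)) ->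
  is_derive t 1 (fun s => \sum_i f i s) (\sum_i f' i).
Proof.
move=> df; have := is_derive_sum df.
by rewrite (_ : \sum_i f i = fun s => \sum_i f i s) //; apply/funext => s; rewrite fct_sumE.
Qed.

Lemma is_derive_expRM (k t : R) : is_derive t 1 (fun s => expR (k * s)) (k * expR (k * t)).
Proof.
have dk : is_derive t 1 (fun s => k * s) k.
  by apply: is_derive_eq (is_derive_mulf (is_derive_cst k t 1) (is_derive_id t 1)) _;
    rewrite mul0r add0r mulr1.
by rewrite mulrC; exact: (is_derive1_comp (is_derive_expR (k * t)) dk).
Qed.

Definition vis_derive n (x : R -> 'cV[R]_n) t (x' : 'cV[R]_n) :=
  forall i, is_derive t 1 (fun s => x s i 0) (x' i 0).

Lemma vis_derive_vderiv n (x : R -> 'cV[R]_n) t :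
  vderivable x t -> vis_derive x t (vderiv x t).
Proof. by move=> dx i; rewrite mxE derive1E; apply: derivableP. Qed.

Lemma vis_deriveB n (x y : R -> 'cV[R]_n) t x' y' :
  vis_derive x t x' -> vis_derive y t y' -> vis_derive (fun s => x s - y s) t (x' - y').
Proof.
move=> dx dy i; rewrite !mxE.
have -> : (fun s => (x s - y s) i 0) = fun s => x s i 0 - y s i 0.
  by apply/funext => s; rewrite !mxE.
exact: is_deriveB.
Qed.

Lemma vis_deriveZ n (x : R -> 'cV[R]_n) t x' (k : R) :
  vis_derive x t x' -> vis_derive (fun s => k *: x s) t (k *: x').
Proof.
move=> dx i; rewrite mxE.
have -> : (fun s => (k *: x s) i 0) = fun s => k * x s i 0.
  by apply/funext => s; rewrite mxE.
by apply: is_derive_eq (is_derive_mulf (is_derive_cst k t 1) (dx i)) _; rewrite mul0r add0r.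
Qed.

Lemma vis_derive_mulmx m n (A : 'M[R]_(m, n)) (x : R -> 'cV[R]_n) t x' :
  vis_derive x t x' -> vis_derive (fun s => A *m x s) t (A *m x').
Proof.
move=> dx i; rewrite mxE.
have -> : (fun s => (A *m x s) i 0) = fun s => \sum_j A i j * x s j 0.
  by apply/funext => s; rewrite mxE.
apply: is_derive_sumf => j.
by apply: is_derive_eq (is_derive_mulf (is_derive_cst (A i j) t 1) (dx j)) _; rewrite mul0r add0r.
Qed.

Lemma vis_derive_col_mx m n (x : R -> 'cV[R]_m) (y : R -> 'cV[R]_n) t x' y' :
  vis_derive x t x' -> vis_derive y t y' ->
  vis_derive (fun s => col_mx (x s) (y s)) t (col_mx x' y').
Proof.
move=> dx dy i; rewrite -(fintype.splitK i); case: (fintype.split i) => k /=.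
  rewrite col_mxEu (_ : (fun s => _) = fun s => x s k 0) ?dx //.
  by apply/funext => s; rewrite col_mxEu.
rewrite col_mxEd (_ : (fun s => _) = fun s => y s k 0) ?dy //.
by apply/funext => s; rewrite col_mxEd.
Qed.

Lemma is_derive_qform n (Q : 'M[R]_n) (x : R -> 'cV[R]_n) t x' : sym Q ->
  vis_derive x t x' -> is_derive t 1 (fun s => qform Q (x s)) (2 * bform Q (x t) x').
Proof.
move=> sQ dx; have dQx := vis_derive_mulmx Q dx.
have -> : (fun s => qform Q (x s)) = fun s => \sum_i x s i 0 * (Q *m x s) i 0.
  by apply/funext => s; rewrite -dotvE -bformE.
apply: is_derive_eq (is_derive_sumf (fun i => is_derive_mulf (dx i) (dQx i))) _.
rewrite big_split /= -!dotvE -!bformE [bform Q x' _]bformC //; ring.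
Qed.

End Derivatives.

Section HalfLineContinuity.
Variable R : realType.

Definition cont0 (f : R -> R) := {within [set t : R | 0 <= t], continuous f}.

Lemma cont0M (f g : R -> R) : cont0 f -> cont0 g -> cont0 (fun s => f s * g s).
Proof. by move=> cf cg x; apply: cvgM; [exact: cf | exact: cg]. Qed.

Lemma cont0_sum n (f : 'I_n -> R -> R) :
  (forall i, cont0 (f i)) -> cont0 (fun s => \sum_i f i s).
Proof.
move=> cf x; apply: cvg_big => // [|i _]; [exact: add_continuous | exact: cf].
Qed.

Lemma vcont0B n (x y : R -> 'cV[R]_n) : vcont0 x -> vcont0 y -> vcont0 (fun s => x s - y s).
Proof.
move=> cx cy i; rewrite (_ : (fun s => _) = fun s => x s i 0 - y s i 0).
  by move=> t; apply: cvgB; [exact: cx | exact: cy].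
by apply/funext => s; rewrite !mxE.
Qed.

Lemma vcont0_mulmx m n (A : 'M[R]_(m, n)) (x : R -> 'cV[R]_n) :
  vcont0 x -> vcont0 (fun s => A *m x s).
Proof.
move=> cx i; rewrite (_ : (fun s => _) = fun s => \sum_j A i j * x s j 0).
  by apply: cont0_sum => j; apply: cont0M (cx j) => t; apply: cvg_cst.
by apply/funext => s; rewrite mxE.
Qed.

Lemma vcont0Z n (x : R -> 'cV[R]_n) (k : R) : vcont0 x -> vcont0 (fun s => k *: x s).
Proof.
move=> cx; have -> : (fun s => k *: x s) = fun s => (k%:M : 'M[R]_n) *m x s.
  by apply/funext => s; rewrite mul_scalar_mx.
exact: vcont0_mulmx.
Qed.

Lemma vcont0_col_mx m n (x : R -> 'cV[R]_m) (y : R -> 'cV[R]_n) :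
  vcont0 x -> vcont0 y -> vcont0 (fun s => col_mx (x s) (y s)).
Proof.
move=> cx cy i; rewrite -(fintype.splitK i); case: (fintype.split i) => k /=.
  by rewrite (_ : (fun s => _) = fun s => x s k 0) ?cx //; apply/funext => s; rewrite col_mxEu.
by rewrite (_ : (fun s => _) = fun s => y s k 0) ?cy //; apply/funext => s; rewrite col_mxEd.
Qed.

Lemma cont0_qform n (Q : 'M[R]_n) (x : R -> 'cV[R]_n) :
  vcont0 x -> cont0 (fun s => qform Q (x s)).
Proof.
move=> cx; have cQx := vcont0_mulmx (A := Q) cx.
rewrite (_ : (fun s => _) = fun s => \sum_i x s i 0 * (Q *m x s) i 0).
  by apply: cont0_sum => i; apply: cont0M.
by apply/funext => s; rewrite -dotvE -bformE.
Qed.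

End HalfLineContinuity.

(* Comparison principle: [exp (Cd t) (V t - hm / Cd)] is nonincreasing. *)
Lemma lyapunov_comparison (R : realType) (V : R -> R) (Cd hm : R) : 0 < Cd -> 0 <= hm ->
  (forall t, 0 < t -> derivable V t 1 /\ V^`() t <= - Cd * V t + hm) ->
  cont0 V -> forall t, 0 <= t -> V t <= expR (- Cd * t) * V 0 + hm / Cd.
Proof.
move=> Cd0 hm0 dV cV t t0; pose W s := expR (Cd * s) * (V s - hm / Cd).
have dW (x : R) : 0 < x -> is_derive x 1 W
    (Cd * expR (Cd * x) * (V x - hm / Cd) + expR (Cd * x) * ((V^`())%classic x - 0)).
  move=> x0; apply: is_derive_mulf; first exact: is_derive_expRM.
  by rewrite derive1E; apply: is_deriveB => //; apply: derivableP; case: (dV x x0).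
have W_nincr : W t <= W 0.
  apply: (@ler0_derive1_nincry _ W 0) => // [x|x|].
  - by rewrite in_itv /= andbT => /dW [].
  - rewrite in_itv /= andbT => x0; rewrite derive1E; have [_ ->] := dW x x0; rewrite subr0.
    have -> : Cd * expR (Cd * x) * (V x - hm / Cd) + expR (Cd * x) * (V^`())%classic x
      = expR (Cd * x) * ((V^`())%classic x + Cd * V x - hm) by field; rewrite gt_eqF.
    by rewrite pmulr_rle0 ?expR_gt0 //; have := (dV x x0).2; lra.
  - have -> : `[0, +oo[%classic = [set t : R | 0 <= t].
      by apply/seteqP; split => x /=; rewrite in_itv /= andbT.
    move=> x; apply: cvgM; last by apply: cvgB; [exact: cV | exact: cvg_cst].
    apply: continuous_subspaceT => y.
    by apply: continuous_comp; [exact: mulrl_continuous | exact: continuous_expR].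
rewrite /W mulr0 expR0 mul1r in W_nincr.
rewrite mulNr expRN; set E := expR (Cd * t) in W_nincr *.
have E0 : 0 < E by apply: expR_gt0.
rewrite -(ler_pM2l E0) mulrDr mulrA mulfV ?gt_eqF // mul1r.
have : 0 <= hm / Cd by rewrite divr_ge0 // ltW.
nra.
Qed.

Lemma exp_decay_eventually_le (R : realType) (Cd hm V0 chi : R) :
  0 < Cd -> 0 < hm -> 0 < chi < 1 -> 0 <= V0 ->
  exists T, 0 <= T /\ forall t, T <= t -> expR (- Cd * t) * V0 + hm / Cd <= hm / (chi * Cd).
Proof.
move=> Cd0 hm0 /andP[chi0 chi1] V00.
pose del := hm / (chi * Cd) - hm / Cd.
have del0 : 0 < del.
  rewrite (_ : del = hm * (1 - chi) / (chi * Cd)); last by rewrite /del; field; rewrite !gt_eqF.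
  by rewrite divr_gt0 ?mulr_gt0 // subr_gt0.
exists (V0 / (Cd * del)); split; first by rewrite divr_ge0 // ltW ?mulr_gt0.
move=> t tT; suff : expR (- Cd * t) * V0 <= del by rewrite /del; lra.
rewrite mulNr expRN ler_pdivrMl ?expR_gt0 //.
have : V0 <= t * (Cd * del) by move: tT; rewrite ler_pdivrMr ?mulr_gt0.
have := expR_ge1Dx (Cd * t); nra.
Qed.

Lemma vnorm_le_sqrt n (R : realType) (x : 'cV[R]_n) (l V B : R) :
  0 < l -> l * dotv x x <= V -> V <= B -> vnorm x <= Num.sqrt (B / l).
Proof.
move=> l0 lxV VB; rewrite vnormE ler_wsqrtr // ler_pdivlMr // mulrC.
exact: le_trans lxV VB.
Qed.

Section ComparisonBounds.
Variables (R : realType) (n : nat) (x : R -> 'cV[R]_n) (V : R -> R) (lam Cd hm : R).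
Hypotheses (lam_gt0 : 0 < lam) (Cd_gt0 : 0 < Cd) (V0_ge0 : 0 <= V 0).
Hypothesis V_ge : forall t, lam * dotv (x t) (x t) <= V t.
Hypothesis V_cmp : forall t, 0 <= t -> V t <= expR (- Cd * t) * V 0 + hm / Cd.

Lemma vnorm_bounded_of_comparison t : 0 <= t ->
  vnorm (x t) <= Num.sqrt ((V 0 + hm / Cd) / lam).
Proof.
move=> t0; apply: vnorm_le_sqrt lam_gt0 (V_ge t) (le_trans (V_cmp t0) _).
rewrite lerD2r; apply: ler_piMl V0_ge0 _.
by rewrite expR_le1 mulNr oppr_le0; exact: mulr_ge0 (ltW Cd_gt0) t0.
Qed.

Lemma vnorm_ultimately_bounded_of_comparison chi : 0 < hm -> 0 < chi < 1 ->
  exists T, 0 <= T /\ forall t, T <= t -> vnorm (x t) <= Num.sqrt (hm / (chi * Cd * lam)).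
Proof.
move=> hm_gt0 chi01.
have [T [T0 HT]] := exp_decay_eventually_le Cd_gt0 hm_gt0 chi01 V0_ge0.
exists T; split => // t tT; rewrite invfM mulrA.
exact: vnorm_le_sqrt lam_gt0 (V_ge t) (le_trans (V_cmp (le_trans T0 tT)) (HT t tT)).
Qed.

End ComparisonBounds.

Section DisturbanceObserver.
Variables (R : realType) (C1 C2 beta : R).
Hypotheses (C1_gt0 : 0 < C1) (C2_gt0 : 0 < C2) (beta_gt0 : 0 < beta).

Definition obs_a := C2 * (C1 ^+ 2 + 2 * C2).
Definition obs_b := C1 * C2.
Definition obs_c := 2 * (C1 ^+ 2 + C2).

Definition obsQ n := blockQ n obs_a obs_b obs_c.

Definition obs_lam := blockQ_min obs_a obs_b obs_c.

(* The decay needs [obs_rate <= beta C1 C2 min(K, 1)] with [K = C1^2 + C2];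
   [K / (K + 1)] is below both [K] and [1]. *)
Definition obs_rate := beta * C1 * C2 * ((C1 ^+ 2 + C2) / (C1 ^+ 2 + C2 + 1)).

Definition obs_Cd := obs_rate / (obs_a + obs_b + obs_c).

(* The summand [1] keeps [obs_hm] positive, so that the ultimate bounds are
   reached in finite time even when [xi_d = 0]. *)
Definition obs_hm (W : R) := (obs_b ^+ 2 + obs_c ^+ 2) * W / obs_rate + 1.

Lemma obs_coeffs_spec :
  [/\ 0 < obs_a, 0 < obs_b, 0 < obs_c & obs_b ^+ 2 < obs_a * obs_c].
Proof.
rewrite /obs_a /obs_b /obs_c; split; rewrite ?mulr_gt0 ?addr_gt0 ?exprn_gt0 ?mulr_gt0 //.
have -> : C2 * (C1 ^+ 2 + 2 * C2) * (2 * (C1 ^+ 2 + C2))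
  = (C1 * C2) ^+ 2 + C2 * (2 * C1 ^+ 4 + 5 * C1 ^+ 2 * C2 + 4 * C2 ^+ 2) by ring.
by rewrite ltrDl mulr_gt0 // !addr_gt0 ?mulr_gt0 ?exprn_gt0.
Qed.

Lemma obsQ_spec n : [/\ 0 < obs_lam, sym (obsQ n.+1), posdef (obsQ n.+1),
  is_min_eig (obsQ n.+1) obs_lam & forall v, obs_lam * dotv v v <= qform (obsQ n.+1) v].
Proof.
have [a0 b0 c0 abc] := obs_coeffs_spec.
have [l0 la E] := blockQ_min_spec a0 b0 c0 abc.
split => //; first exact: sym_blockQ.
- exact: blockQ_posdef l0 la E.
- exact: blockQ_min_eig la E.
- by move=> v; apply: blockQ_min_le la E.
Qed.

Lemma obs_rate_gt0 : 0 < obs_rate.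
Proof. by rewrite /obs_rate !(mulr_gt0, invr_gt0, addr_gt0, exprn_gt0). Qed.

Lemma obs_Cd_gt0 : 0 < obs_Cd.
Proof.
have [a0 b0 c0 _] := obs_coeffs_spec.
by rewrite /obs_Cd divr_gt0 ?obs_rate_gt0 //; lra.
Qed.

Lemma obs_hm_gt0 W : 0 <= W -> 0 < obs_hm W.
Proof.
move=> W0; have r0 := obs_rate_gt0.
have : 0 <= (obs_b ^+ 2 + obs_c ^+ 2) * W / obs_rate.
  by rewrite divr_ge0 ?(ltW r0) // mulr_ge0 // addr_ge0 // sqr_ge0.
rewrite /obs_hm; lra.
Qed.

Lemma obs_lyapunov_decrease n (z1 z2 w : 'cV[R]_n) (W : R) : dotv w w <= W ->
  2 * bform (obsQ n) (col_mx z1 z2)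
      (col_mx (beta *: z2 - (C1 * beta) *: z1) (- (C2 * beta) *: z1 - w))
    <= - obs_Cd * qform (obsQ n) (col_mx z1 z2) + obs_hm W.
Proof.
move=> wW; have [a0 b0 c0 _] := obs_coeffs_spec; have r0 := obs_rate_gt0.
have mm0 : 0 < beta * C1 * C2 by rewrite !mulr_gt0.
set V := qform (obsQ n) (col_mx z1 z2).
have VS : V <= (obs_a + obs_b + obs_c) * (dotv z1 z1 + dotv z2 z2).
  by rewrite -dotv_col_mx; apply: bform_blockQ_le; apply: ltW.
have CdV : obs_Cd * V <= obs_rate * (dotv z1 z1 + dotv z2 z2).
  rewrite /obs_Cd mulrAC ler_pdivrMr ?addr_gt0 //.
  by apply: le_trans (ler_wpM2l (ltW r0) VS) _; rewrite mulrCA mulrC.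
have hW : obs_b ^+ 2 / obs_rate * dotv w w + obs_c ^+ 2 / obs_rate * dotv w w
    <= (obs_b ^+ 2 + obs_c ^+ 2) * W / obs_rate.
  rewrite -mulrDl -mulrDl [X in _ <= X]mulrAC.
  apply: ler_wpM2l wW; apply: mulr_ge0; last by rewrite invr_ge0 ltW.
  by apply: addr_ge0; apply: sqr_ge0.
have rate_le : obs_rate * (dotv z1 z1 + dotv z2 z2)
    <= beta * C1 * C2 * ((C1 ^+ 2 + C2) * dotv z1 z1 + dotv z2 z2).
  set K := C1 ^+ 2 + C2; have K0 : 0 < K by rewrite addr_gt0 ?exprn_gt0.
  have kK : K / (K + 1) <= K by rewrite ler_pdivrMr ?ler_peMr //; lra.
  have k1 : K / (K + 1) <= 1 by rewrite ler_pdivrMr ?mul1r; lra.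
  have := mulr_ge0 (ltW mm0) (dotv_ge0 z1); have := mulr_ge0 (ltW mm0) (dotv_ge0 z2).
  rewrite /obs_rate -/K; nra.
have young1 := young_dotv obs_b z1 w r0.
have young2 := young_dotv (- obs_c) z2 w r0; rewrite sqrrN in young2.
rewrite /obsQ bform_blockQ !(dotvBr, dotvZr) !(dotvC z2 z1).
rewrite [X in X <= _](_ : _ = - 2 * (beta * C1 * C2)
    * ((C1 ^+ 2 + C2) * dotv z1 z1 + dotv z2 z2) + 2 * obs_b * dotv z1 w
    + 2 * (- obs_c) * dotv z2 w); last by rewrite /obs_a /obs_b /obs_c; ring.
rewrite /obs_hm; lra.
Qed.

Lemma obs_error_is_derive n (J : 'M[R]_n) (we Om u d F1 F2 : R -> 'cV[R]_n) t :
  J \in unitmx ->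
  vderivable we t -> J *m vderiv we t = Om t + u t + d t -> vderivable d t ->
  vderivable F1 t -> vderiv F1 t = invmx J *m Om t + invmx J *m u t + F2 t
                                   - (C1 * beta) *: (F1 t - we t) ->
  vderivable F2 t -> vderiv F2 t = - (C2 * beta ^+ 2) *: (F1 t - we t) ->
  let z1 s := beta *: (F1 s - we s) in let z2 s := F2 s - invmx J *m d s in
  vis_derive (fun s => col_mx (z1 s) (z2 s)) t
    (col_mx (beta *: z2 t - (C1 * beta) *: z1 t) (- (C2 * beta) *: z1 t - invmx J *m vderiv d t)).
Proof.
move=> Ju dwe Jwe dd dF1 F1E dF2 F2E z1 z2.
have dwe' : vis_derive we t (invmx J *m (Om t + u t + d t)).
  by rewrite -Jwe mulKmx //; apply: vis_derive_vderiv.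
apply: vis_derive_col_mx.
  have -> : beta *: z2 t - (C1 * beta) *: z1 t
      = beta *: (vderiv F1 t - invmx J *m (Om t + u t + d t)).
    by rewrite /z1 /z2 F1E !mulmxDr; apply/matrixP => i j; rewrite !mxE; ring.
  exact/vis_deriveZ/vis_deriveB/dwe'/vis_derive_vderiv.
have -> : - (C2 * beta) *: z1 t - invmx J *m vderiv d t
    = vderiv F2 t - invmx J *m vderiv d t.
  by rewrite /z1 F2E; apply/matrixP => i j; rewrite !mxE; ring.
exact/vis_deriveB/vis_derive_mulmx/vis_derive_vderiv/dd/vis_derive_vderiv.
Qed.

Lemma obs_lyapunov_inequality n (J : 'M[R]_n.+1) (we Om u d F1 F2 : R -> 'cV[R]_n.+1)
    (xi t : R) :
  sym J -> posdef J ->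
  vderivable we t -> J *m vderiv we t = Om t + u t + d t ->
  vderivable d t -> vnorm (vderiv d t) <= xi ->
  vderivable F1 t -> vderiv F1 t = invmx J *m Om t + invmx J *m u t + F2 t
                                   - (C1 * beta) *: (F1 t - we t) ->
  vderivable F2 t -> vderiv F2 t = - (C2 * beta ^+ 2) *: (F1 t - we t) ->
  let V s := qform (obsQ n.+1) (col_mx (beta *: (F1 s - we s)) (F2 s - invmx J *m d s)) in
  derivable V t 1 /\
  V^`() t <= - obs_Cd * V t + obs_hm ((rayleigh_max (invmx J) * xi) ^+ 2).
Proof.
move=> sJ pJ dwe Jwe dd d_le dF1 F1E dF2 F2E V.
have deps := obs_error_is_derive (posdef_unitmx pJ) dwe Jwe dd dF1 F1E dF2 F2E.
have [dV V'E] := is_derive_qform (sym_blockQ _ obs_a obs_b obs_c) deps.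
split => //; rewrite derive1E V'E; apply: obs_lyapunov_decrease.
set w := invmx J *m vderiv d t.
have w_le : vnorm w <= rayleigh_max (invmx J) * xi.
  apply: le_trans (vnorm_mulmx_le_rayleigh (sym_invmx sJ) (posdef_invmx pJ) _) _.
  exact: ler_wpM2l (rayleigh_max_ge0 (posdef_invmx pJ)) _ _ d_le.
by rewrite -sqr_vnorm; have := vnorm_ge0 w; nra.
Qed.

End DisturbanceObserver.

Theorem mainTheorem2 (R : realType) (J : 'M[R]_3) (lJmax : R)
  (C1 C2 beta xi_d : R) :
  sym J -> posdef J -> is_max_eig J lJmax ->
  0 < C1 -> 0 < C2 -> 0 < beta ->
  exists (Q2 : 'M[R]_6) (Cd hm lQmin : R),
    [/\ sym Q2, posdef Q2, 0 < Cd, 0 <= hm & is_min_eig Q2 lQmin] /\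
    forall (qv : R -> 'cV[R]_3) (q0 : R -> R) (we Om u d F1 F2 : R -> 'cV[R]_3),
      (* unit quaternion *)
      (forall t, 0 <= t -> vnorm (qv t) ^+ 2 + q0 t ^+ 2 = 1) ->
      (* continuity of the states and of d on [0, +oo) *)
      vcont0 qv -> {within [set t : R | 0 <= t], continuous q0} ->
      vcont0 we -> vcont0 F1 -> vcont0 F2 -> vcont0 d ->
      (* attitude error dynamics *)
      (forall t, 0 < t -> vderivable qv t /\
         vderiv qv t = Fe (q0 t) (qv t) *m we t) ->
      (forall t, 0 < t -> derivable q0 t 1 /\
         q0^`() t = - 2^-1 * ((qv t)^T *m we t) 0 0) ->
      (forall t, 0 < t -> vderivable we t /\
         J *m vderiv we t = Om t + u t + d t) ->
      (* bounded disturbance with bounded derivative *)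
      (exists M, forall t, 0 <= t -> vnorm (d t) <= M) ->
      (forall t, 0 < t -> vderivable d t /\ vnorm (vderiv d t) <= xi_d) ->
      (* disturbance observer *)
      (forall t, 0 < t -> vderivable F1 t /\
         vderiv F1 t = invmx J *m Om t + invmx J *m u t + F2 t
                       - (C1 * beta) *: (F1 t - we t)) ->
      (forall t, 0 < t -> vderivable F2 t /\
         vderiv F2 t = - (C2 * beta ^+ 2) *: (F1 t - we t)) ->
      let e1 := fun t => F1 t - we t in
      let e2 := fun t => F2 t - invmx J *m d t in
      let eps := fun t => (col_mx (beta *: e1 t) (e2 t) : 'cV[R]_6) in
      let V := fun t => qform Q2 (eps t) in
      let dtil := fun t => d t - J *m F2 t in
      [/\ (* Lyapunov inequality along solutions *)
          (forall t, 0 < t -> derivable V t 1 /\ V^`() t <= - Cd * V t + hm),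
          (* exponential convergence of eps into the compact set {V <= hm/Cd} *)
          (forall t, 0 <= t -> V t <= expR (- Cd * t) * V 0 + hm / Cd),
          (* uniform ultimate boundedness of eps *)
          (forall chi, 0 < chi < 1 -> exists T, 0 <= T /\ forall t, T <= t ->
             vnorm (eps t) <= Num.sqrt (hm / (chi * Cd * lQmin))),
          (* boundedness of the disturbance estimation error *)
          (exists M, forall t, 0 <= t -> vnorm (dtil t) <= M) &
          (* its ultimate bound *)
          (forall chi, 0 < chi < 1 -> exists T, 0 <= T /\ forall t, T <= t ->
             vnorm (dtil t) <= lJmax * Num.sqrt (hm / (chi * Cd * lQmin)))].
Proof.
move=> sJ pJ mJ C1_gt0 C2_gt0 beta_gt0.
have [lam_gt0 Q_sym Q_pd Q_min Q_ge] := obsQ_spec C1_gt0 C2_gt0 2.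
have Cd_gt0 := obs_Cd_gt0 C1_gt0 C2_gt0 beta_gt0.
pose hm := obs_hm C1 C2 beta ((rayleigh_max (invmx J) * xi_d) ^+ 2).
have hm_gt0 : 0 < hm by apply: obs_hm_gt0; rewrite ?sqr_ge0.
exists (obsQ C1 C2 3), (obs_Cd C1 C2 beta), hm, (obs_lam C1 C2).
split; first by split => //; exact: ltW.
move=> qv q0 we Om u d F1 F2 _ _ _ cwe cF1 cF2 cd _ _ dwe _ dd dF1 dF2 e1 e2 eps V dtil.
have V_decr t : 0 < t -> derivable V t 1 /\ V^`() t <= - obs_Cd C1 C2 beta * V t + hm.
  move=> t0; have [[dwe_t Jwe] [dd_t d_le]] := (dwe t t0, dd t t0).
  have [[dF1_t F1E] [dF2_t F2E]] := (dF1 t t0, dF2 t t0).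
  exact: obs_lyapunov_inequality sJ pJ dwe_t Jwe dd_t d_le dF1_t F1E dF2_t F2E.
have V_cmp := lyapunov_comparison Cd_gt0 (ltW hm_gt0) V_decr
  (cont0_qform (vcont0_col_mx (vcont0Z (vcont0B cF1 cwe)) (vcont0B cF2 (vcont0_mulmx cd)))).
have V_ge t : obs_lam C1 C2 * dotv (eps t) (eps t) <= V t := Q_ge (eps t).
have V0_ge0 : 0 <= V 0 := bform_ge0 Q_pd (eps 0).
have lJ_ge0 := max_eig_ge0 sJ pJ mJ.
have dtil_le t : vnorm (dtil t) <= lJmax * vnorm (eps t).
  rewrite (_ : dtil t = - (J *m e2 t)); last by rewrite /dtil /e2 mulmxBr mulKVmx ?posdef_unitmx // opprB.
  rewrite vnormN; apply: le_trans (vnorm_mulmx_le_max_eig _ sJ pJ mJ) _.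
  by rewrite ler_wpM2l //; apply: (@vnorm_col_mx_r R 3 3).
have eps_ult := vnorm_ultimately_bounded_of_comparison lam_gt0 Cd_gt0 V0_ge0 V_ge V_cmp.
split => //.
- by move=> chi /(eps_ult _ hm_gt0).
- exists (lJmax * Num.sqrt ((V 0 + hm / obs_Cd C1 C2 beta) / obs_lam C1 C2)) => t t0.
  apply: le_trans (dtil_le t) _; rewrite ler_wpM2l //.
  exact (vnorm_bounded_of_comparison lam_gt0 Cd_gt0 V0_ge0 V_ge V_cmp t0).
- move=> chi /(eps_ult _ hm_gt0) [T [T0 HT]]; exists T; split => // t tT.
  by apply: le_trans (dtil_le t) _; rewrite ler_wpM2l // HT.
Qed.
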